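(* Consider the following two-party game. Alice and Bob share a two-qubit state $\rho$ on $\mathbb{C}^2\otimes\mathbb{C}^2$. For each $x=x_1x_2x_3\in\{0,1\}^3$, Alice applies a completely positive trace-preserving map $\Lambda_x$ to her qubit (the first tensor factor), producing $\rho_x=(\Lambda_x\otimes\mathrm{id})(\rho)$, and sends her qubit to Bob. For each $y\in\{1,2,3\}$, Bob performs a two-outcome projective measurement $\{\Pi_y^0,\Pi_y^1\}$ on the two-qubit system, with observable $B_y=\Pi_y^0-\Pi_y^1$. The success probability is $$\mathcal{S}_Q=\frac{1}{24}\sum_{y=1}^{3}\sum_{x\in\{0,1\}^3}\mathrm{Tr}\big[\rho_x\,\Pi_y^{x_y}\big],$$ whose optimal quantum value is $\mathcal{S}_Q^{opt}=\frac12+\frac{1}{\sqrt6}$. Define the operators $$M_1=-\rho_{000}-\rho_{011}+\rho_{101}+\rho_{110},\quad M_2=-\rho_{000}+\rho_{011}-\rho_{101}+\rho_{110},\quad M_3=-\rho_{000}+\rho_{011}+\rho_{101}-\rho_{110},$$ $$N_1=\rho_{001}+\rho_{010}-\rho_{100}-\rho_{111},\quad N_2=\rho_{001}-\rho_{010}+\rho_{100}-\rho_{111},\quad N_3=-\rho_{001}+\rho_{010}+\rho_{100}-\rho_{111}.$$ If $\mathcal{S}_Q=\mathcal{S}_Q^{opt}$, then: (i) the four states $\{\rho_x: x_1\oplus x_2\oplus x_3=0\}$ are mutually orthogonal and sum to $\mathbb{1}_2\otimes\mathbb{1}_2$, and likewise the four states $\{\rho_x: x_1\oplus x_2\oplus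 x_3=1\}$ are mutually orthogonal and sum to $\mathbb{1}_2\otimes\mathbb{1}_2$; (ii) for every $x\in\{0,1\}^3$, $\mathrm{Tr}[\rho_x\rho_{\bar x}]=0$, where $\bar x$ is the bitwise complement of $x$, and $\mathrm{Tr}[\rho_x\rho_{x'}]=\frac13$ for all $x,x'$ with $x_1\oplus x_2\oplus x_3\neq x'_1\oplus x'_2\oplus x'_3$ and $x'\neq\bar x$; (iii) Bob's observables satisfy $B_y=\sqrt{\tfrac{3}{8}}\,(N_y-M_y)$ for all $y\in\{1,2,3\}$.
   Context: $\oplus$ denotes addition modulo 2. The game is the ''3-bit variant of prepare-measure random access code'', in which Bob on input $y$ should output $x_y$. *)

(* Complex numbers are modelled as R[i] for an arbitrary
   real closed field R (mathcomp-real-closed); R = the reals gives C. *)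
From HB Require Import structures.
From mathcomp Require Import all_boot all_order all_algebra.
From mathcomp.real_closed Require Import complex mxtens.
Set Implicit Arguments. Unset Strict Implicit. Unset Printing Implicit Defensive.
Import Order.TTheory GRing.Theory Num.Theory.
Local Open Scope ring_scope.

Section QDefs.
Variable R : rcfType.
Local Notation C := R[i].

Definition adjmx {m n} (A : 'M[C]_(m, n)) : 'M[C]_(n, m) := (map_mx Num.conj A)^T.

Definition psd {n} (A : 'M[C]_n) : Prop :=
  adjmx A = A /\ forall v : 'cV[C]_n, 0 <= (adjmx v *m A *m v) 0 0.

Definition density {n} (A : 'M[C]_n) : Prop := psd A /\ \tr A = 1.

(* (L ⊗ id_n) acting on 'M_(2 * n), first tensor factor = the qubit *)
Definition tens_id (n : nat) (L : 'M[C]_2 -> 'M[C]_2) (X : 'M[C]_(2 * n))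
  : 'M[C]_(2 * n) :=
  \sum_(k < n) \sum_(l < n)
    (L (\matrix_(i, j) X (mxtens_index (i, k)) (mxtens_index (j, l))))
      *t (delta_mx k l : 'M[C]_n).

Definition completely_positive (L : 'M[C]_2 -> 'M[C]_2) : Prop :=
  forall (n : nat) (X : 'M[C]_(2 * n)), psd X -> psd (tens_id L X).

Definition trace_preserving (L : 'M[C]_2 -> 'M[C]_2) : Prop :=
  forall X : 'M[C]_2, \tr (L X) = \tr X.

Definition CPTP (L : {linear 'M[C]_2 -> 'M[C]_2}) : Prop :=
  completely_positive L /\ trace_preserving L.

Definition proj_meas {n} (P0 P1 : 'M[C]_n) : Prop :=
  [/\ adjmx P0 = P0, P0 *m P0 = P0, adjmx P1 = P1, P1 *m P1 = P1
    & P0 + P1 = 1%:M].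

End QDefs.

(* bit strings x = x1 x2 x3; index y : 'I_3 with y = 0,1,2 <-> paper's 1,2,3 *)
Definition bits := {ffun 'I_3 -> bool}.
Definition b3 (a b c : bool) : bits := [ffun i : 'I_3 => nth false [:: a; b; c] i].
Definition parity (x : bits) : bool := \big[addb/false]_(i < 3) x i.
Definition compl (x : bits) : bits := [ffun i => ~~ x i].

Section Game.
Variable R : rcfType.
Local Notation C := R[i].

(* success probability S_Q; bit false = outcome 0 *)
Definition success (r : bits -> 'M[C]_(2 * 2)) (Pi : 'I_3 -> bool -> 'M[C]_(2 * 2)) : C :=
  24^-1 * \sum_(y < 3) \sum_(x : bits) \tr (r x *m Pi y (x y)).

Definition Mop (r : bits -> 'M[C]_(2 * 2)) (y : 'I_3) : 'M[C]_(2 * 2) :=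
  let r000 := r (b3 false false false) in let r011 := r (b3 false true true) in
  let r101 := r (b3 true false true) in let r110 := r (b3 true true false) in
  match val y with
  | 0 => - r000 - r011 + r101 + r110
  | 1 => - r000 + r011 - r101 + r110
  | _ => - r000 + r011 + r101 - r110
  end.

Definition Nop (r : bits -> 'M[C]_(2 * 2)) (y : 'I_3) : 'M[C]_(2 * 2) :=
  let r001 := r (b3 false false true) in let r010 := r (b3 false true false) in
  let r100 := r (b3 true false false) in let r111 := r (b3 true true true) in
  match val y with
  | 0 => r001 + r010 - r100 - r111
  | 1 => r001 - r010 + r100 - r111
  | _ => - r001 + r010 + r100 - r111
  end.

End Game.

From HB Require Import structures.
From mathcomp Require Import all_boot all_order all_algebra.
From mathcomp.real_closed Require Import complex mxtens.
From mathcomp Require Import spectral.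
From mathcomp Require Import ring.
Set Implicit Arguments. Unset Strict Implicit. Unset Printing Implicit Defensive.
Import Order.TTheory GRing.Theory Num.Theory.
Local Open Scope ring_scope.
Local Open Scope sesquilinear_scope.

(* Write B_y = Pi_y^0 - Pi_y^1 and D_y = sum_x (-1)^(x_y) rho_x = N_y - M_y, so
   that S_Q = 1/2 + (1/48) sum_y Tr (D_y B_y).  Since
   sum_y (-1)^(x_y + x'_y) = 4 [x = x'] - (-1)^(|x| + |x'|) - 4 [x' = compl x],
   we get sum_y D_y^2 = 4 sum_x rho_x^2 - P^2 - 4 sum_x rho_x rho_(compl x) with
   P = sum_x (-1)^|x| rho_x, and for c = sqrt(3/8) the quantity
   24 - 2c sum_y Tr (D_y B_y) becomes a sum of nonnegative terms:
   Tr (B_y - c D_y)^2, 1 - Tr rho_x^2, Tr P^2 and Tr (rho_x rho_(compl x)).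
   At the optimum it vanishes, so B_y = c D_y, every rho_x is a rank-one
   projector, P = 0 and rho_x rho_(compl x) = 0.  Then D_y^2 = 8/3 forces
   sum_x rho_x = 2, and P = 0 splits this into two resolutions of the identity,
   one per parity class, whose members are therefore mutually orthogonal.
   Finally, expanding Tr (rho_x D_y^2) = 8/3 along the two classes shows that
   every x' of the other parity, except compl x, overlaps rho_x by 1/3. *)

Section Adjoint.
Variable R : rcfType.
Local Notation C := R[i].

Lemma adjmxE m n (A : 'M[C]_(m, n)) : adjmx A = A ^t*.
Proof. by rewrite /adjmx map_trmx. Qed.

Lemma adjmxK m n (A : 'M[C]_(m, n)) : adjmx (adjmx A) = A.
Proof. by rewrite !adjmxE trmxCK. Qed.

Lemma adjmxM m n p (A : 'M[C]_(m, n)) (B : 'M[C]_(n, p)) :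
  adjmx (A *m B) = adjmx B *m adjmx A.
Proof. by rewrite /adjmx map_mxM trmx_mul. Qed.

Lemma adjmxD m n (A B : 'M[C]_(m, n)) : adjmx (A + B) = adjmx A + adjmx B.
Proof. by apply/matrixP => i j; rewrite !mxE rmorphD. Qed.

Lemma adjmxN m n (A : 'M[C]_(m, n)) : adjmx (- A) = - adjmx A.
Proof. by apply/matrixP => i j; rewrite !mxE rmorphN. Qed.

Lemma adjmxZ m n a (A : 'M[C]_(m, n)) : adjmx (a *: A) = a^* *: adjmx A.
Proof. by apply/matrixP => i j; rewrite !mxE rmorphM. Qed.

Lemma adjmx_sum m n (I : finType) (P : pred I) (F : I -> 'M[C]_(m, n)) :
  adjmx (\sum_(i | P i) F i) = \sum_(i | P i) adjmx (F i).
Proof.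
apply/matrixP => i j; rewrite !mxE !summxE rmorph_sum.
by apply: eq_bigr => k _; rewrite !mxE.
Qed.

Lemma adjmx_delta m n (i : 'I_m) (j : 'I_n) :
  adjmx (delta_mx i j : 'M[C]_(m, n)) = delta_mx j i.
Proof. by apply/matrixP => k l; rewrite !mxE rmorph_nat andbC. Qed.

Lemma unitarymx_mul_adj n (U : 'M[C]_n) : U \is unitarymx -> U *m adjmx U = 1%:M.
Proof. by rewrite adjmxE => /unitarymxP. Qed.

Lemma mxtrace_unitary_conj n (U A : 'M[C]_n) : U \is unitarymx ->
  \tr (adjmx U *m A *m U) = \tr A.
Proof.
by move=> /unitarymx_mul_adj UU; rewrite mxtrace_mulC mulmxA UU mul1mx.
Qed.

Lemma mxtrace_mul_adj_ge0 m n (X : 'M[C]_(m, n)) : 0 <= \tr (X *m adjmx X).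
Proof.
apply: sumr_ge0 => i _; rewrite mxE.
by apply: sumr_ge0 => j _; rewrite !mxE mul_conjC_ge0.
Qed.

Lemma mxtrace_mul_adj_eq0 m n (X : 'M[C]_(m, n)) :
  \tr (X *m adjmx X) = 0 -> X = 0.
Proof.
have entry_ge0 i k : 0 <= X i k * (adjmx X) k i by rewrite !mxE mul_conjC_ge0.
have diag_ge0 i : 0 <= (X *m adjmx X) i i.
  by rewrite mxE; apply: sumr_ge0 => k _.
move=> /(psumr_eq0P (fun i _ => diag_ge0 i)) diag0; apply/matrixP => i j.
have := diag0 i isT; rewrite mxE => /(psumr_eq0P (fun k _ => entry_ge0 i k)).
by move=> /(_ j isT) /eqP; rewrite !mxE mul_conjC_eq0 => /eqP.
Qed.

Lemma herm_mxtrace_sqr_ge0 n (X : 'M[C]_n) : adjmx X = X -> 0 <= \tr (X *m X).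
Proof. by move=> X_herm; rewrite -{2}X_herm mxtrace_mul_adj_ge0. Qed.

Lemma herm_mxtrace_sqr_eq0 n (X : 'M[C]_n) :
  adjmx X = X -> \tr (X *m X) = 0 -> X = 0.
Proof. by move=> X_herm; rewrite -{2}X_herm; apply: mxtrace_mul_adj_eq0. Qed.

End Adjoint.

Section PositiveSemidefinite.
Variables (R : rcfType) (n : nat).
Local Notation C := R[i].
Implicit Types A B : 'M[C]_n.

Lemma psd_spectral A : psd A ->
  exists U : 'M[C]_n, exists d : 'rV[C]_n,
    [/\ U \is unitarymx, forall i, 0 <= d 0 i & A = adjmx U *m diag_mx d *m U].
Proof.
move=> [A_herm A_nneg].
have /orthomx_spectralP A_spectral : A \is normalmx.
  by apply/normalmxP; rewrite -adjmxE A_herm.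
set U := spectralmx A in A_spectral; set d := spectral_diag A in A_spectral.
have U_unitary : U \is unitarymx by apply: spectral_unitarymx.
have UU := unitarymx_mul_adj U_unitary.
rewrite invmx_unitary // -adjmxE in A_spectral.
exists U, d; split => // i.
have := A_nneg (adjmx U *m delta_mx i 0).
rewrite adjmxM adjmxK adjmx_delta A_spectral.
rewrite !mulmxA -(mulmxA _ U) UU mulmx1 -(mulmxA _ U) UU mulmx1.
by rewrite -colE -rowE !mxE eqxx mulr1n.
Qed.

Lemma psd_sqrt A : psd A -> exists S : 'M[C]_n, adjmx S = S /\ S *m S = A.
Proof.
move=> /psd_spectral [U [d [U_unitary d_ge0 ->]]].
have UU := unitarymx_mul_adj U_unitary.
pose e : 'rV[C]_n := \row_j sqrtC (d 0 j).
exists (adjmx U *m diag_mx e *m U); split.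
  rewrite !adjmxM adjmxK mulmxA; congr (_ *m _ *m _).
  apply/matrixP => i j; rewrite !mxE rmorphMn eq_sym.
  case: eqP => [->|_]; rewrite ?mulr0n // !mulr1n.
  by apply: conj_Creal; apply: ger0_real; rewrite sqrtC_ge0.
rewrite !mulmxA -(mulmxA _ U) UU mulmx1 -(mulmxA (adjmx U)) mulmx_diag.
congr (_ *m diag_mx _ *m _); apply/rowP => j.
by rewrite !mxE -expr2 sqrtCK.
Qed.

Lemma mxtrace_mul_sqr (S T : 'M[C]_n) : adjmx S = S -> adjmx T = T ->
  \tr (S *m S *m (T *m T)) = \tr (S *m T *m adjmx (S *m T)).
Proof.
move=> S_herm T_herm; rewrite adjmxM S_herm T_herm -!mulmxA mxtrace_mulC.
by rewrite -!mulmxA [T *m (T *m S)]mulmxA.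
Qed.

Lemma psd_mxtrace_mul_ge0 A B : psd A -> psd B -> 0 <= \tr (A *m B).
Proof.
move=> /psd_sqrt [S [S_herm <-]] /psd_sqrt [T [T_herm <-]].
by rewrite mxtrace_mul_sqr // mxtrace_mul_adj_ge0.
Qed.

Lemma psd_mxtrace_mul_eq0 A B : psd A -> psd B -> \tr (A *m B) = 0 -> A *m B = 0.
Proof.
move=> /psd_sqrt [S [S_herm <-]] /psd_sqrt [T [T_herm <-]].
rewrite mxtrace_mul_sqr // => /mxtrace_mul_adj_eq0 ST0.
by rewrite -mulmxA (mulmxA S T T) mulmxA ST0 mulmx0 mul0mx.
Qed.

(* Tr A^2 = sum_i d_i^2 <= sum_i d_i = 1 over the eigenvalues d_i of A, with
   equality iff every d_i is 0 or 1. *)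
Lemma density_mxtrace_sqr A : density A -> \tr (A *m A) <= 1 ?= iff (A *m A == A).
Proof.
move=> [/psd_spectral [U [d [U_unitary d_ge0 defA]]] trA].
have UU := unitarymx_mul_adj U_unitary.
pose d2 : 'rV[C]_n := \row_j (d 0 j * d 0 j).
have defA2 : A *m A = adjmx U *m diag_mx d2 *m U.
  by rewrite defA !mulmxA -(mulmxA _ U) UU mulmx1 -(mulmxA (adjmx U)) mulmx_diag.
have conjU_inj (D D' : 'M[C]_n) :
    (adjmx U *m D *m U == adjmx U *m D' *m U) = (D == D').
  apply/eqP/eqP => [eqDD'|-> //].
  have cancelU M : U *m (adjmx U *m M *m U) *m adjmx U = M.
    by rewrite !mulmxA UU mul1mx -mulmxA UU mulmx1.
  by rewrite -(cancelU D) eqDD' cancelU.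
rewrite defA mxtrace_unitary_conj // mxtrace_diag in trA.
rewrite defA2 mxtrace_unitary_conj // mxtrace_diag -trA defA conjU_inj.
have d_le1 i : d 0 i <= 1.
  by rewrite -trA (bigD1 i) //= lerDl sumr_ge0.
have -> : (diag_mx d2 == diag_mx d) = [forall i, d2 0 i == d 0 i].
  apply/eqP/forallP => [eq_diag i|eq_d].
    by have /matrixP /(_ i i) := eq_diag; rewrite !mxE eqxx !mulr1n => /eqP.
  by congr diag_mx; apply/rowP => i; apply/eqP.
apply: leif_sum => i _; apply: leif_eq.
by rewrite mxE ler_piMr.
Qed.

End PositiveSemidefinite.

Section MatrixAlgebra.
Variables (K : comPzRingType) (n : nat).
Implicit Types X Y : 'M[K]_n.

Lemma mxtrace_sqr_subZ X Y a :
  \tr ((X - a *: Y) *m (X - a *: Y))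
  = \tr (X *m X) - 2 * a * \tr (Y *m X) + a * a * \tr (Y *m Y).
Proof.
rewrite mulmxBl !mulmxBr -!scalemxAl -!scalemxAr !raddfB /= !mxtraceZ.
by rewrite [\tr (X *m Y)]mxtrace_mulC; ring.
Qed.

Lemma mulmx_sumZ (I : finType) (a b : I -> K) (A B : I -> 'M[K]_n) :
  (\sum_i a i *: A i) *m (\sum_j b j *: B j)
  = \sum_i \sum_j (a i * b j) *: (A i *m B j).
Proof.
rewrite mulmx_suml; apply: eq_bigr => i _.
rewrite -scalemxAl mulmx_sumr scaler_sumr.
by apply: eq_bigr => j _; rewrite -scalemxAr scalerA.
Qed.

Lemma mxtrace_tens m (A : 'M[K]_m) (B : 'M[K]_n) : \tr (A *t B) = \tr A * \tr B.
Proof. by rewrite /mxtrace mulr_sum; apply: eq_bigr => k _; rewrite mxE. Qed.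

Lemma mxtrace_delta (k l : 'I_n) : \tr (delta_mx k l : 'M[K]_n) = (k == l)%:R.
Proof.
rewrite /mxtrace (bigD1 k) //= mxE eqxx big1 ?addr0 // => i /negbTE ik.
by rewrite mxE ik.
Qed.

End MatrixAlgebra.

Lemma sum_deltaZ (K : pzSemiRingType) (V : lSemiModType K) (I : finType)
    (a : I) (f : I -> V) :
  \sum_i ((a == i)%:R : K) *: f i = f a.
Proof.
rewrite (bigD1 a) //= eqxx scale1r big1 ?addr0 // => i /negbTE.
by rewrite eq_sym => ->; rewrite scale0r.
Qed.

Lemma psum4_eq0 (K : numDomainType) (a b c d : K) :
  0 <= a -> 0 <= b -> 0 <= c -> 0 <= d -> a + b + c + d = 0 ->
  [/\ a = 0, b = 0, c = 0 & d = 0].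
Proof.
move=> a0 b0 c0 d0 /eqP; rewrite !paddr_eq0 ?addr_ge0 //.
by move=> /andP [/andP [/andP [/eqP -> /eqP ->] /eqP ->] /eqP ->].
Qed.

Section PartialTrace.
Variable R : rcfType.
Local Notation C := R[i].

Lemma mxtrace_tens_id n (L : 'M[C]_2 -> 'M[C]_2) (X : 'M[C]_(2 * n)) :
  (forall Y, \tr (L Y) = \tr Y) -> \tr (tens_id L X) = \tr X.
Proof.
move=> L_tr; rewrite /tens_id raddf_sum /=.
transitivity
  (\sum_(k < n) \sum_(i < 2) X (mxtens_index (i, k)) (mxtens_index (i, k))).
  apply: eq_bigr => k _; rewrite raddf_sum /= (bigD1 k) //= big1 ?addr0.
    rewrite mxtrace_tens mxtrace_delta eqxx mulr1 L_tr.
    by apply: eq_bigr => i _; rewrite mxE.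
  by move=> l /negbTE lk; rewrite mxtrace_tens mxtrace_delta eq_sym lk mulr0.
rewrite exchange_big pair_bigA [RHS]/mxtrace (reindex (@mxtens_index 2 n)) /=.
  by apply: eq_bigr => -[].
by exists (@mxtens_unindex 2 n) => k _; rewrite (mxtens_indexK, mxtens_unindexK).
Qed.

End PartialTrace.

Section Bits.

Definition ord3_0 : 'I_3 := @Ordinal 3 0 isT.
Definition ord3_1 : 'I_3 := @Ordinal 3 1 isT.
Definition ord3_2 : 'I_3 := @Ordinal 3 2 isT.

Lemma b3_eta (x : bits) : x = b3 (x ord3_0) (x ord3_1) (x ord3_2).
Proof.
apply/ffunP => -[[|[|[|//]]] i_lt3]; rewrite ffunE /=;
  by congr (x _); apply: val_inj.
Qed.

Lemma bits_ind (P : bits -> Prop) : (forall a b c, P (b3 a b c)) -> forall x, P x.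
Proof. by move=> Pb3 x; rewrite [x]b3_eta. Qed.

Lemma parity_b3 a b c : parity (b3 a b c) = a (+) b (+) c.
Proof. by rewrite /parity !big_ord_recr big_ord0 /= !ffunE. Qed.

Lemma compl_b3 a b c : compl (b3 a b c) = b3 (~~ a) (~~ b) (~~ c).
Proof. by apply/ffunP => -[[|[|[|//]]] i_lt3]; rewrite !ffunE. Qed.

Lemma eq_b3 a b c a' b' c' :
  (b3 a b c == b3 a' b' c') = [&& a == a', b == b' & c == c'].
Proof.
apply/eqP/and3P => [eq_abc|[/eqP -> /eqP -> /eqP ->] //].
have := congr1 (fun x : bits => (x ord3_0, x ord3_1, x ord3_2)) eq_abc.
by rewrite /= !ffunE => -[-> -> ->]; split.
Qed.

Lemma card_bits : #|{: bits}| = 8.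
Proof. by rewrite card_ffun card_bool card_ord. Qed.

Lemma sum_bits (V : nmodType) (F : bits -> V) :
  \sum_(x : bits) F x
  = \sum_(a : bool) \sum_(b : bool) \sum_(c : bool) F (b3 a b c).
Proof.
rewrite (reindex (fun t : bool * bool * bool => b3 t.1.1 t.1.2 t.2)) /=.
  by rewrite !pair_bigA.
exists (fun x : bits => (x ord3_0, x ord3_1, x ord3_2)) => [[[a b] c] _|x _] /=.
  by rewrite !ffunE.
by rewrite -b3_eta.
Qed.

(* x' is x with the single bit y flipped. *)
Lemma opposite_parity_mismatch (x x' : bits) :
  parity x != parity x' -> x' != compl x ->
  exists y : 'I_3, forall z : bits,
    (parity z == ~~ parity x) && (z y != x y) = (z == x') || (z == compl x).
Proof.
elim/bits_ind: x => a b c; elim/bits_ind: x' => a' b' c'.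
rewrite !parity_b3 compl_b3 eq_b3.
case: a; case: b; case: c; case: a'; case: b'; case: c' => //= _ _;
  solve [exists ord3_0; elim/bits_ind => d e f; rewrite parity_b3 !eq_b3 !ffunE /=;
           by case: d; case: e; case: f
        |exists ord3_1; elim/bits_ind => d e f; rewrite parity_b3 !eq_b3 !ffunE /=;
           by case: d; case: e; case: f
        |exists ord3_2; elim/bits_ind => d e f; rewrite parity_b3 !eq_b3 !ffunE /=;
           by case: d; case: e; case: f].
Qed.

Lemma sum_sign_bits (K : comPzRingType) (x x' : bits) :
  \sum_(y < 3) (-1) ^+ x y * (-1) ^+ x' y =
  4 * (x == x')%:R - (-1) ^+ parity x * (-1) ^+ parity x'
    - 4 * (compl x == x')%:R :> K.
Proof.
elim/bits_ind: x => a b c; elim/bits_ind: x' => a' b' c'.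
rewrite compl_b3 !eq_b3 !parity_b3 !big_ord_recr big_ord0 /= !ffunE /=.
by case: a; case: b; case: c; case: a'; case: b'; case: c';
  rewrite /= ?expr0 ?expr1; ring.
Qed.

End Bits.

Section OrthogonalIdempotents.
Variables (K : comPzRingType) (n : nat) (I : finType) (P : pred I).
Variable F : I -> 'M[K]_n.
Hypothesis F_orth : forall i j, P i -> P j -> i != j -> F i *m F j = 0.
Hypothesis F_idem : forall i, P i -> F i *m F i = F i.

Lemma orth_idem_mulmx_sumr (a : I -> K) w : P w ->
  F w *m (\sum_(z | P z) a z *: F z) = a w *: F w.
Proof.
move=> Pw; rewrite mulmx_sumr (bigD1 w) //= -scalemxAr F_idem // big1 ?addr0 //.
by move=> z /andP [Pz zw]; rewrite -scalemxAr F_orth ?scaler0 // eq_sym.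
Qed.

Lemma orth_idem_mulmx_suml (a : I -> K) w : P w ->
  (\sum_(z | P z) a z *: F z) *m F w = a w *: F w.
Proof.
move=> Pw; rewrite mulmx_suml (bigD1 w) //= -scalemxAl F_idem // big1 ?addr0 //.
by move=> z /andP [Pz zw]; rewrite -scalemxAl F_orth ?scaler0.
Qed.

Lemma orth_idem_sum_sqr (a : I -> K) :
  (\sum_(z | P z) a z *: F z) *m (\sum_(z | P z) a z *: F z)
  = \sum_(z | P z) (a z * a z) *: F z.
Proof.
rewrite mulmx_suml; apply: eq_bigr => z Pz.
by rewrite -scalemxAl orth_idem_mulmx_sumr // scalerA.
Qed.

End OrthogonalIdempotents.

(* Tr F_i = sum_k Tr (F_i F_k) = Tr F_i + sum_(k != i) Tr (F_i F_k), a sum of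
   nonnegative terms. *)
Lemma psd_idem_sum1_orth (R : rcfType) n (I : finType) (P : pred I)
    (F : I -> 'M[R[i]]_n) :
  (forall i, P i -> psd (F i)) -> (forall i, P i -> F i *m F i = F i) ->
  \sum_(i | P i) F i = 1%:M ->
  forall i j, P i -> P j -> i != j -> F i *m F j = 0.
Proof.
move=> F_psd F_idem F_sum i j Pi Pj ij.
have cross_ge0 k : P k && (k != i) -> 0 <= \tr (F i *m F k).
  by move=> /andP [Pk _]; apply: psd_mxtrace_mul_ge0; [apply: F_psd..].
have cross0 : \sum_(k | P k && (k != i)) \tr (F i *m F k) = 0.
  apply: (@addrI _ (\tr (F i *m F i))); rewrite addr0 -bigD1 //=.
  by rewrite -raddf_sum -mulmx_sumr F_sum mulmx1 F_idem.
apply: psd_mxtrace_mul_eq0; [exact: F_psd..|].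
by apply: (psumr_eq0P cross_ge0 cross0); rewrite Pj eq_sym.
Qed.

Section Sqrt38.
Variable C : numClosedFieldType.

Lemma sqrtC38_sqr : sqrtC (3 / 8) * sqrtC (3 / 8) = 3 / 8 :> C.
Proof. by rewrite -expr2 sqrtCK. Qed.

Lemma sqrtC38_conj : (sqrtC (3 / 8))^* = sqrtC (3 / 8) :> C.
Proof. by apply/conj_Creal/ger0_real; rewrite sqrtC_ge0 divr_ge0 ?ler0n. Qed.

Lemma sqrtC38_mul_sqrtC6 : sqrtC (3 / 8) * sqrtC 6 = 3 / 2 :> C.
Proof.
rewrite -sqrtCM ?qualifE /= ?divr_ge0 ?ler0n //.
have -> : 3 / 8 * 6 = (3 / 2) ^+ 2 :> C.
  by field.
by apply: sqrCK; rewrite divr_ge0 ?ler0n.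
Qed.

End Sqrt38.

Section Game.
Variable R : rcfType.
Local Notation C := R[i].
Local Notation c := (sqrtC (3 / 8) : C).
Variables (r : bits -> 'M[C]_(2 * 2)) (Pi : 'I_3 -> bool -> 'M[C]_(2 * 2)).
Hypothesis r_psd : forall x, psd (r x).
Hypothesis r_tr : forall x, \tr (r x) = 1.
Hypothesis Pi_meas : forall y, proj_meas (Pi y false) (Pi y true).

Definition obs y := Pi y false - Pi y true.
Definition Dop y := \sum_(x : bits) (-1) ^+ x y *: r x.
Definition Pop := \sum_(x : bits) (-1) ^+ parity x *: r x.

Definition Dclass y p := \sum_(x | parity x == p) (-1) ^+ x y *: r x.

Lemma Pi_obs y b : Pi y b = 2^-1 *: (1%:M + (-1) ^+ b *: obs y).
Proof.
have [_ _ _ _ Pi_sum] := Pi_meas y; rewrite /obs -Pi_sum.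
by apply/matrixP => i j; case: b; rewrite !mxE /=; field.
Qed.

Lemma obs_adj y : adjmx (obs y) = obs y.
Proof.
by have [P0_adj _ P1_adj _ _] := Pi_meas y; rewrite adjmxD adjmxN P0_adj P1_adj.
Qed.

Lemma obs_sqr y : obs y *m obs y = 1%:M.
Proof.
have [_ P0_idem _ P1_idem Pi_sum] := Pi_meas y.
have P1E : Pi y true = 1%:M - Pi y false by rewrite -Pi_sum addrC addKr.
have P01 : Pi y false *m Pi y true = 0 by rewrite P1E mulmxBr mulmx1 P0_idem subrr.
have P10 : Pi y true *m Pi y false = 0 by rewrite P1E mulmxBl mul1mx P0_idem subrr.
by rewrite /obs mulmxBl !mulmxBr P0_idem P1_idem P01 P10 subr0 sub0r opprK.
Qed.

Lemma Dop_adj y : adjmx (Dop y) = Dop y.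
Proof.
rewrite adjmx_sum; apply: eq_bigr => x _.
by rewrite adjmxZ rmorph_sign (r_psd x).1.
Qed.

Lemma Pop_adj : adjmx Pop = Pop.
Proof.
rewrite adjmx_sum; apply: eq_bigr => x _.
by rewrite adjmxZ rmorph_sign (r_psd x).1.
Qed.

Lemma sum_parity_class p :
  2 *: \sum_(x | parity x == p) r x = \sum_(x : bits) r x + (-1) ^+ p *: Pop.
Proof.
rewrite /Pop [in RHS]scaler_sumr -big_split big_mkcond [in LHS]scaler_sumr /=.
apply: eq_bigr => x _; rewrite scalerA -{2}[r x]scale1r -scalerDl.
have -> : 1 + (-1) ^+ p * (-1) ^+ parity x = 2 * (parity x == p)%:R :> C.
  by case: p; case: (parity x); rewrite /=; ring.
by rewrite -scalerA; case: eqP; rewrite ?scale1r ?scale0r ?scaler0.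
Qed.

Lemma Dop_split y p : Dop y = Dclass y p + Dclass y (~~ p).
Proof.
rewrite /Dop (bigID (fun x => parity x == p)) /=; congr (_ + _).
by apply: eq_bigl => x; case: p; case: (parity x).
Qed.

Lemma Dop_NM y : Dop y = Nop r y - Mop r y.
Proof.
rewrite /Dop /Nop /Mop sum_bits !big_bool /=.
move: (r (b3 false false false)) (r (b3 false false true)) (r (b3 false true false))
  (r (b3 false true true)) (r (b3 true false false)) (r (b3 true false true))
  (r (b3 true true false)) (r (b3 true true true)) => r0 r1 r2 r3 r4 r5 r6 r7.
by case: y => -[|[|[|//]]] y_lt3; rewrite !ffunE /= ?expr0 ?expr1;
  apply/matrixP => i j; rewrite !mxE; ring.
Qed.

Lemma success_obs :
  success r Pi = 2^-1 + 48^-1 * \sum_(y < 3) \tr (Dop y *m obs y).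
Proof.
have term x y : \tr (r x *m Pi y (x y))
                = 2^-1 + 2^-1 * \tr (((-1) ^+ x y *: r x) *m obs y).
  rewrite Pi_obs -scalemxAr mxtraceZ mulmxDr mulmx1 mxtraceD r_tr.
  by rewrite -scalemxAr -scalemxAl !mxtraceZ mulrDr mulr1.
have inner y : \sum_(x : bits) \tr (r x *m Pi y (x y))
                 = 4 + 2^-1 * \tr (Dop y *m obs y).
  rewrite (eq_bigr _ (fun x _ => term x y)) big_split /= sumr_const card_bits.
  rewrite -mulr_sumr /Dop mulmx_suml raddf_sum -mulr_natr; congr (_ + _).
  by field.
rewrite /success (eq_bigr _ (fun y _ => inner y)) big_split /= sumr_const card_ord.
by rewrite -mulr_sumr -mulr_natr; field.
Qed.

Lemma sum_Dop_sqr :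
  \sum_(y < 3) Dop y *m Dop y = 4 *: \sum_(x : bits) r x *m r x - Pop *m Pop
                                - 4 *: \sum_(x : bits) r x *m r (compl x).
Proof.
rewrite /Dop (eq_bigr _ (fun y _ => mulmx_sumZ _ _ _ _)) exchange_big /=.
under eq_bigr => x _ do rewrite exchange_big /=.
under eq_bigr => x _ do under eq_bigr => x' _ do rewrite -scaler_suml sum_sign_bits.
rewrite /Pop mulmx_sumZ !scaler_sumr -!sumrB; apply: eq_bigr => x _.
rewrite -(sum_deltaZ x (fun x' => r x *m r x')).
rewrite -(sum_deltaZ (compl x) (fun x' => r x *m r x')).
rewrite !scaler_sumr -!sumrB; apply: eq_bigr => x' _.
by rewrite !scalerA !scalerBl.
Qed.

(* By success_obs, the right-hand side vanishes exactly at the optimal success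
   probability 1/2 + 1/sqrt 6. *)
Lemma sos_identity :
  \sum_(y < 3) \tr ((obs y - c *: Dop y) *m (obs y - c *: Dop y))
  + 3 / 2 * \sum_(x : bits) (1 - \tr (r x *m r x)) + 3 / 8 * \tr (Pop *m Pop)
  + 3 / 2 * \sum_(x : bits) \tr (r x *m r (compl x))
  = 24 - 2 * c * \sum_(y < 3) \tr (Dop y *m obs y).
Proof.
have expand y : \tr ((obs y - c *: Dop y) *m (obs y - c *: Dop y))
    = 4 + (- 2 * c) * \tr (Dop y *m obs y) + 3 / 8 * \tr (Dop y *m Dop y).
  by rewrite mxtrace_sqr_subZ obs_sqr mxtrace1 sqrtC38_sqr; ring.
have sum_expand : \sum_(y < 3) \tr ((obs y - c *: Dop y) *m (obs y - c *: Dop y))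
    = 12 - 2 * c * \sum_(y < 3) \tr (Dop y *m obs y)
      + 3 / 8 * \tr (\sum_(y < 3) Dop y *m Dop y).
  rewrite (eq_bigr _ (fun y _ => expand y)) !big_split /= sumr_const card_ord.
  by rewrite raddf_sum -!mulr_sumr; ring.
have mxtrace_sum (F : bits -> 'M[C]_(2 * 2)) :
  \tr (\sum_(x : bits) F x) = \sum_(x : bits) \tr (F x) by rewrite raddf_sum.
rewrite sum_expand sum_Dop_sqr !raddfB /= !mxtraceZ !mxtrace_sum.
rewrite sumrB sumr_const card_bits.
by field.
Qed.

Section Optimal.
Hypothesis r_opt : success r Pi = 2^-1 + (sqrtC 6)^-1.

Lemma sos_eq0 :
  \sum_(y < 3) \tr ((obs y - c *: Dop y) *m (obs y - c *: Dop y))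
  + 3 / 2 * \sum_(x : bits) (1 - \tr (r x *m r x)) + 3 / 8 * \tr (Pop *m Pop)
  + 3 / 2 * \sum_(x : bits) \tr (r x *m r (compl x)) = 0.
Proof.
have sqrtC6_neq0 : sqrtC 6 != 0 :> C by rewrite sqrtC_eq0 pnatr_eq0.
have bias : \sum_(y < 3) \tr (Dop y *m obs y) = 48 / sqrtC 6.
  move: r_opt; rewrite success_obs => /addrI bias.
  by rewrite -[LHS]mul1r -bias; field.
have c_bias : c * (48 / sqrtC 6) = 12.
  rewrite -[c](mulfK sqrtC6_neq0) sqrtC38_mul_sqrtC6 mulf_div -expr2 sqrtCK.
  by field.
by rewrite sos_identity bias -mulrA c_bias; ring.
Qed.

Lemma sos_terms_eq0 :
  [/\ forall y, \tr ((obs y - c *: Dop y) *m (obs y - c *: Dop y)) = 0,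
      forall x, \tr (r x *m r x) = 1, \tr (Pop *m Pop) = 0
    & forall x, \tr (r x *m r (compl x)) = 0].
Proof.
have dev_ge0 y : 0 <= \tr ((obs y - c *: Dop y) *m (obs y - c *: Dop y)).
  apply: herm_mxtrace_sqr_ge0.
  by rewrite adjmxD adjmxN adjmxZ sqrtC38_conj obs_adj Dop_adj.
have purity_ge0 x : 0 <= 1 - \tr (r x *m r x).
  by rewrite subr_ge0 (density_mxtrace_sqr (conj (r_psd x) (r_tr x))).
have compl_ge0 x : 0 <= \tr (r x *m r (compl x)) by apply: psd_mxtrace_mul_ge0.
have c32_ge0 : 0 <= 3 / 2 :> C by rewrite divr_ge0 ?ler0n.
have c38_ge0 : 0 <= 3 / 8 :> C by rewrite divr_ge0 ?ler0n.
have c32_neq0 : 3 / 2 != 0 :> C by rewrite mulf_eq0 invr_eq0 !pnatr_eq0.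
have c38_neq0 : 3 / 8 != 0 :> C by rewrite mulf_eq0 invr_eq0 !pnatr_eq0.
have [dev0 /eqP purity0 /eqP Pop0 /eqP compl0] := psum4_eq0
  (sumr_ge0 _ (fun y _ => dev_ge0 y))
  (mulr_ge0 c32_ge0 (sumr_ge0 _ (fun x _ => purity_ge0 x)))
  (mulr_ge0 c38_ge0 (herm_mxtrace_sqr_ge0 Pop_adj))
  (mulr_ge0 c32_ge0 (sumr_ge0 _ (fun x _ => compl_ge0 x))) sos_eq0.
rewrite mulf_eq0 (negbTE c32_neq0) in purity0.
rewrite mulf_eq0 (negbTE c38_neq0) in Pop0.
rewrite mulf_eq0 (negbTE c32_neq0) in compl0.
split.
- by move=> y; apply: (psumr_eq0P (fun y _ => dev_ge0 y) dev0).
- move=> x; apply/eqP; rewrite eq_sym -subr_eq0; apply/eqP.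
  exact: (psumr_eq0P (fun x _ => purity_ge0 x) (eqP purity0)).
- exact/eqP.
- by move=> x; apply: (psumr_eq0P (fun x _ => compl_ge0 x) (eqP compl0)).
Qed.

Lemma obs_optimal y : obs y = c *: Dop y.
Proof.
have [dev0 _ _ _] := sos_terms_eq0.
apply/eqP; rewrite -subr_eq0; apply/eqP/herm_mxtrace_sqr_eq0 => //.
by rewrite adjmxD adjmxN adjmxZ sqrtC38_conj obs_adj Dop_adj.
Qed.

Lemma r_idem x : r x *m r x = r x.
Proof.
have [_ pure _ _] := sos_terms_eq0.
by apply/eqP; rewrite -(density_mxtrace_sqr (conj (r_psd x) (r_tr x))) pure.
Qed.

Lemma Pop_eq0 : Pop = 0.
Proof.
by have [_ _ Pop0 _] := sos_terms_eq0; apply: herm_mxtrace_sqr_eq0 Pop_adj _.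
Qed.

Lemma r_compl_orth x : r x *m r (compl x) = 0.
Proof. by have [_ _ _ compl0] := sos_terms_eq0; apply: psd_mxtrace_mul_eq0. Qed.

Lemma Dop_sqr y : Dop y *m Dop y = (8 / 3) *: 1%:M.
Proof.
have := obs_sqr y.
rewrite obs_optimal -scalemxAl -scalemxAr scalerA sqrtC38_sqr => <-.
by rewrite scalerA [_ * _](_ : _ = 1) ?scale1r //; field.
Qed.

Lemma sum_r : \sum_(x : bits) r x = 2%:M.
Proof.
have := sum_Dop_sqr; rewrite (eq_bigr _ (fun y _ => Dop_sqr y)) sumr_const card_ord.
rewrite Pop_eq0 mulmx0 subr0 (eq_bigr _ (fun x _ => r_idem x)).
rewrite (eq_bigr _ (fun x _ => r_compl_orth x)) big1_eq scaler0 subr0.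
have four_neq0 : 4 != 0 :> C by rewrite pnatr_eq0.
move=> sum_Dop; apply: (scalerI four_neq0); rewrite -sum_Dop scalemx1 -raddfMn /=.
by rewrite scale_scalar_mx -mulr_natr; congr (_%:M); field.
Qed.

Lemma parity_class_sum1 p : \sum_(x | parity x == p) r x = 1%:M.
Proof.
have two_neq0 : 2 != 0 :> C by rewrite pnatr_eq0.
apply: (scalerI two_neq0); rewrite sum_parity_class sum_r Pop_eq0 scaler0 addr0.
by rewrite scalemx1.
Qed.

Lemma r_orth p x x' : parity x = p -> parity x' = p -> x != x' -> r x *m r x' = 0.
Proof.
move=> px px'; apply: (@psd_idem_sum1_orth _ _ _ (fun z => parity z == p)).
- by move=> z _; apply: r_psd.
- by move=> z _; apply: r_idem.
- exact: parity_class_sum1.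
- exact/eqP.
- exact/eqP.
Qed.

Lemma Dclass_sqr y p : Dclass y p *m Dclass y p = 1%:M.
Proof.
rewrite orth_idem_sum_sqr; first last.
- by move=> x _; apply: r_idem.
- by move=> x x' /eqP px /eqP px'; apply: r_orth px px'.
rewrite -(parity_class_sum1 p); apply: eq_bigr => x _.
by rewrite -expr2 sqrr_sign scale1r.
Qed.

Lemma mulmx_Dclass (x : bits) (y : 'I_3) :
  r x *m Dclass y (parity x) = (-1) ^+ x y *: r x.
Proof.
apply: orth_idem_mulmx_sumr => //; last by move=> z _; apply: r_idem.
by move=> z z' /eqP pz /eqP pz'; apply: r_orth pz pz'.
Qed.

Lemma Dclass_mulmx (x : bits) (y : 'I_3) :
  Dclass y (parity x) *m r x = (-1) ^+ x y *: r x.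
Proof.
apply: orth_idem_mulmx_suml => //; last by move=> z _; apply: r_idem.
by move=> z z' /eqP pz /eqP pz'; apply: r_orth pz pz'.
Qed.

(* Expand Tr (r x D_y^2) = 8/3 with D_y = E + F, where E = Dclass y (parity x)
   satisfies E^2 = F^2 = 1 and r x E = E r x = (-1)^(x_y) r x. *)
Lemma sign_mxtrace_Dclass (x : bits) (y : 'I_3) :
  (-1) ^+ x y * \tr (r x *m Dclass y (~~ parity x)) = 3^-1.
Proof.
set s := (-1) ^+ x y.
set E := Dclass y (parity x); set F := Dclass y (~~ parity x).
have trEF : \tr (r x *m (E *m F)) = s * \tr (r x *m F).
  by rewrite mulmxA mulmx_Dclass -scalemxAl mxtraceZ.
have trFE : \tr (r x *m (F *m E)) = s * \tr (r x *m F).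
  by rewrite mulmxA mxtrace_mulC mulmxA Dclass_mulmx -scalemxAl mxtraceZ.
have := congr1 (fun M => \tr (r x *m M)) (Dop_sqr y).
rewrite /= (Dop_split y (parity x)) -/E -/F mulmxDl !mulmxDr !Dclass_sqr.
rewrite !mxtraceD trEF trFE -scalemxAr !mulmx1 mxtraceZ r_tr mulr1 => tr_eq.
have -> : s * \tr (r x *m F)
          = (1 + s * \tr (r x *m F) + (s * \tr (r x *m F) + 1) - 2) / 2 by field.
by rewrite tr_eq; field.
Qed.

(* In (-1)^(x_y) Tr (r x Dclass y (~~ parity x)) = 1/3 the overlaps of r x with
   the other parity class appear with sign -1 exactly for x' and compl x, and
   they sum to 1. *)
Lemma overlap_third x x' : parity x != parity x' -> x' != compl x ->
  \tr (r x *m r x') = 3^-1.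
Proof.
move=> px_x' x'_compl; have [y mism] := opposite_parity_mismatch px_x' x'_compl.
pose q z := \tr (r x *m r z).
pose opp z := parity z == ~~ parity x.
have q_sum : \sum_(z | opp z) q z = 1.
  rewrite -(r_tr x) -[in RHS](mulmx1 (r x)) -(parity_class_sum1 (~~ parity x)).
  by rewrite mulmx_sumr raddf_sum.
have mism_sum : \sum_(z | opp z && (z y != x y)) q z = q x'.
  rewrite (eq_bigl _ _ mism) (bigD1 x') ?eqxx //= (big_pred1 (compl x)).
    by rewrite /q r_compl_orth mxtrace0 addr0.
  by move=> z /=; case: (z =P x') => [->|_] /=; rewrite ?(negbTE x'_compl) ?andbT.
pose t (z : bits) := (-1) ^+ x y * \tr (r x *m ((-1) ^+ z y *: r z)).
have t_mism (z : bits) : z y != x y -> t z = - q z.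
  rewrite /t -scalemxAr mxtraceZ mulrA.
  by case: (x y); case: (z y) => //= _; rewrite expr0 expr1 ?mulr1 ?mul1r mulN1r.
have t_match (z : bits) : ~~ (z y != x y) -> t z = q z.
  rewrite negbK => /eqP zx.
  by rewrite /t -scalemxAr mxtraceZ mulrA zx -expr2 sqrr_sign mul1r.
have := sign_mxtrace_Dclass x y.
rewrite /Dclass mulmx_sumr raddf_sum mulr_sumr -/opp.
rewrite (bigID (fun z : bits => z y != x y)) /=.
rewrite (eq_bigr _ (fun z zP => t_mism z (andP zP).2)).
rewrite (eq_bigr _ (fun z zP => t_match z (andP zP).2)) sumrN mism_sum.
move: q_sum; rewrite (bigID (fun z : bits => z y != x y)) /= mism_sum => q_sum.
rewrite -[X in - q x' + X](addKr (q x')) q_sum => tr_eq; change (q x' = 3^-1).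
have -> : q x' = (1 - (- q x' + (- q x' + 1))) / 2 by field.
by rewrite tr_eq; field.
Qed.

End Optimal.
End Game.

Theorem theorem1 (R : rcfType) (rho : 'M[R[i]]_(2 * 2))
  (Lam : bits -> {linear 'M[R[i]]_2 -> 'M[R[i]]_2})
  (Pi : 'I_3 -> bool -> 'M[R[i]]_(2 * 2)) :
  density rho ->
  (forall x, CPTP (Lam x)) ->
  (forall y, proj_meas (Pi y false) (Pi y true)) ->
  let rx := fun x : bits => tens_id (Lam x) rho in
  success rx Pi = 2^-1 + (sqrtC 6)^-1 ->
  [/\ (forall p : bool,
         (forall x x' : bits, parity x = p -> parity x' = p -> x != x' ->
            rx x *m rx x' = 0)
         /\ \sum_(x : bits | parity x == p) rx x = 1%:M),
      (forall x : bits, \tr (rx x *m rx (compl x)) = 0),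
      (forall x x' : bits, parity x != parity x' -> x' != compl x ->
         \tr (rx x *m rx x') = 3^-1)
    & (forall y : 'I_3,
         Pi y false - Pi y true = sqrtC (3 / 8) *: (Nop rx y - Mop rx y))].
Proof.
move=> [rho_psd rho_tr] Lam_CPTP Pi_meas rx opt.
have rx_psd x : psd (rx x) by apply: (Lam_CPTP x).1.
have rx_tr x : \tr (rx x) = 1.
  by rewrite mxtrace_tens_id // => Y; apply: (Lam_CPTP x).2.
split.
- move=> p; split; first exact: (r_orth rx_psd rx_tr Pi_meas opt).
  exact: (parity_class_sum1 rx_psd rx_tr Pi_meas opt).
- by move=> x; rewrite (r_compl_orth rx_psd rx_tr Pi_meas opt) mxtrace0.
- exact: (overlap_third rx_psd rx_tr Pi_meas opt).
- by move=> y; rewrite -Dop_NM; apply: (obs_optimal rx_psd rx_tr Pi_meas opt).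
Qed.
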